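(* Let $p\geq r$ and let $A$ be a nonnegative symmetric $r$-matrix of order $n$. If $A$ is regular, then $\eta^{(p)}(A)=n^{-r/p}\Sigma A$.
   Context: A cubical $r$-matrix of order $n$ is a function $A$ on $[n]^r$ with entries $a_{i_1,\ldots,i_r}$; symmetric means invariant under permutations of indices. $\Sigma B$ denotes the sum of all entries of a matrix $B$. $\eta^{(p)}(A)=\max\{|\sum a_{i_1,\ldots,i_r}x_{i_1}\cdots x_{i_r}|:\mathbf{x}\in\mathbb{R}^n,|\mathbf{x}|_p=1\}$. For $k\in[r]$, $s\in[n]$, the slice $A^{(k)}_s$ is the $(r-1)$-matrix obtained by fixing $i_k=s$. $A$ is regular if for every $k\in[r]$, $\Sigma A^{(k)}_1=\cdots=\Sigma A^{(k)}_n$. *)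

From HB Require Import structures.
From mathcomp Require Import all_boot all_order all_algebra all_fingroup.
From mathcomp Require Import all_classical all_reals all_analysis.
Set Implicit Arguments. Unset Strict Implicit. Unset Printing Implicit Defensive.
Import Order.TTheory GRing.Theory Num.Theory.
Local Open Scope ring_scope.
Local Open Scope classical_set_scope.

Definition cmatrix (R : realType) (r n : nat) := {ffun 'I_r -> 'I_n} -> R.

Definition entry_sum (R : realType) r n (A : cmatrix R r n) : R := \sum_i A i.

Definition mnonneg (R : realType) r n (A : cmatrix R r n) : Prop :=
  forall i, 0 <= A i.

Definition msymmetric (R : realType) r n (A : cmatrix R r n) : Prop :=
  forall (s : 'S_r) (i : {ffun 'I_r -> 'I_n}), A [ffun k => i (s k)] = A i.

Definition slice_sum (R : realType) r n (A : cmatrix R r n) (k : 'I_r) (s : 'I_n) : R :=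
  \sum_(i : {ffun 'I_r -> 'I_n} | i k == s) A i.

Definition mregular (R : realType) r n (A : cmatrix R r n) : Prop :=
  forall (k : 'I_r) (s t : 'I_n), slice_sum A k s = slice_sum A k t.

Definition pnorm (R : realType) n (p : R) (x : 'I_n -> R) : R :=
  (\sum_j `|x j| `^ p) `^ p^-1.

Definition mform (R : realType) r n (A : cmatrix R r n) (x : 'I_n -> R) : R :=
  \sum_(i : {ffun 'I_r -> 'I_n}) A i * \prod_(k < r) x (i k).

(* eta^{(p)}(A) = max { |A(x)| : |x|_p = 1 }; the max is attained (compactness),
   so it equals the supremum. *)
Definition eta_norm (R : realType) r n (p : R) (A : cmatrix R r n) : R :=
  sup [set `|mform A x| | x in [set x : 'I_n -> R | pnorm p x = 1]].

(* For |x|_p = 1, the AM-GM inequality with weight 1 - r/p >= 0 on the constant 1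
   (this is where p >= r is used) gives, for every index tuple i,
     prod_k |x_(i_k)| <= n^(-r/p) (1 - r/p + (n/p) sum_k |x_(i_k)|^p).
   Summing against the nonnegative entries of A, regularity turns each
   sum_i a_i |x_(i_k)|^p into (Sigma A / n) sum_s |x_s|^p = Sigma A / n, so
   |A(x)| <= n^(-r/p) Sigma A.  The constant vector with entries n^(-1/p)
   attains this bound. *)

From HB Require Import structures.
From mathcomp Require Import all_boot all_order all_algebra all_fingroup.
From mathcomp Require Import all_classical all_reals all_analysis.
From mathcomp Require Import ring.
Set Implicit Arguments. Unset Strict Implicit. Unset Printing Implicit Defensive.
Import Order.TTheory GRing.Theory Num.Theory.
Local Open Scope ring_scope.

Section RealInequalities.
Variable R : realType.

Lemma sup_eq_max (E : set R) (x : R) : E x -> ubound E x -> sup E = x.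
Proof.
move=> Ex ubx; apply/le_anti/andP; split; first by apply: ge_sup => //; exists x.
by apply: sup_upper_bound => //; split; [exists x | exists x].
Qed.

Lemma powR_prod (I : finType) (u : I -> R) (a : R) :
  (forall i, 0 <= u i) -> (\prod_i u i) `^ a = \prod_i u i `^ a.
Proof.
move=> u0; suff [] : 0 <= \prod_i u i /\ (\prod_i u i) `^ a = \prod_i u i `^ a by [].
apply: (big_ind2 (fun x y => 0 <= x /\ x `^ a = y)) => [|x1 y1 x2 y2 [x10 <-] [x20 <-]|i _] //.
- by rewrite powR1.
- by rewrite mulr_ge0 // powRM.
Qed.

Lemma powR_le_Bernoulli (t a : R) : 0 <= t -> 0 < a <= 1 ->
  t `^ a <= 1 - a + a * t.
Proof.
move=> t0 /andP[a0]; rewrite le_eqVlt => /predU1P[->|a1].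
  by rewrite powRr1 // subrr add0r mul1r.
have ia0 : 0 < a^-1 by rewrite invr_gt0.
have ia1 : 0 < (1 - a)^-1 by rewrite invr_gt0 subr_gt0.
have := @conjugate_powR _ (t `^ a) 1 _ _ (powR_ge0 _ _) ler01 ia0 ia1.
rewrite !invrK subrKC mulr1 powR1 -powRrM mulfV ?gt_eqF // powRr1 //.
by move=> /(_ erefl); rewrite mul1r [t * a]mulrC addrC.
Qed.

Lemma AGM_powR (I : finType) (u : I -> R) (a : R) :
  0 < a -> #|I|%:R * a <= 1 -> (forall i, 0 <= u i) ->
  \prod_i u i `^ a <= 1 - #|I|%:R * a + a * \sum_i u i.
Proof.
move=> a0 Ia u0; have [I0|I_gt0] := posnP #|I|.
  have I_empty : predT =i xpred0 := card0_eq I0.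
  by rewrite !big_pred0 // I0 mul0r subr0 mulr0 addr0.
have nI0 : 0 < (#|I|%:R : R) by rewrite ltr0n.
pose mu := (\sum_i u i) / #|I|%:R.
have mu0 : 0 <= mu by rewrite divr_ge0 ?sumr_ge0 ?ler0n.
have AGM : \prod_i u i <= mu ^+ #|I|.
  exact: (leif_AGM (A := predT) (fun i _ => u0 i)).1.
rewrite -powR_prod //; apply: le_trans (ge0_ler_powR (ltW a0) _ _ AGM) _.
- by rewrite nnegrE; apply: prodr_ge0.
- by rewrite nnegrE exprn_ge0.
rewrite -powR_mulrn // -powRrM.
have nIa : 0 < #|I|%:R * a <= 1 by rewrite mulr_gt0.
apply: (le_trans (y := 1 - #|I|%:R * a + #|I|%:R * a * mu)).
  exact: powR_le_Bernoulli.
by rewrite lerD2l /mu mulrAC [_ * (_ / _)]mulrC divfK ?gt_eqF // mulrC.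
Qed.
End RealInequalities.

Lemma prod_le_powR_sum (R : realType) (I : finType) (y : I -> R) (N p : R) :
  0 < N -> 0 < p -> #|I|%:R <= p -> (forall i, 0 <= y i) ->
  \prod_i y i <= N `^ (- (#|I|%:R / p)) * (1 - #|I|%:R / p + N / p * \sum_i y i `^ p).
Proof.
move=> N0 p0 Ip y0.
have ip0 : 0 < p^-1 by rewrite invr_gt0.
have Iip : #|I|%:R * p^-1 <= 1 by rewrite ler_pdivrMr // mul1r.
have := AGM_powR ip0 Iip (fun i => mulr_ge0 (ltW N0) (powR_ge0 (y i) p)).
have root i : (N * y i `^ p) `^ p^-1 = N `^ p^-1 * y i.
  by rewrite powRM ?powR_ge0 ?(ltW N0) // -powRrM mulfV ?gt_eqF // powRr1.
have cancel : N `^ (- (#|I|%:R / p)) * N `^ p^-1 ^+ #|I| = 1.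
  rewrite -powR_mulrn ?powR_ge0 // -powRrM powRN [p^-1 * _]mulrC.
  by rewrite mulVf // gt_eqF // powR_gt0.
rewrite (eq_bigr _ (fun i _ => root i)) big_split /= prodr_const -mulr_sumr.
rewrite mulrA [p^-1 * N]mulrC => AGM.
have -> : \prod_i y i =
    N `^ (- (#|I|%:R / p)) * (N `^ p^-1 ^+ #|I| * \prod_i y i).
  by rewrite mulrA cancel mul1r.
by apply: ler_wpM2l; first exact: powR_ge0.
Qed.

Lemma pnorm_eq1 (R : realType) n (p : R) (x : 'I_n -> R) :
  0 < p -> pnorm p x = 1 -> \sum_j `|x j| `^ p = 1.
Proof.
move=> p0 /(congr1 (fun t => t `^ p)); rewrite /pnorm -powRrM mulVf ?gt_eqF // powR1.
by rewrite powRr1 //; apply: sumr_ge0 => j _; apply: powR_ge0.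
Qed.

Lemma pnorm_const (R : realType) n (p : R) :
  (0 < n)%N -> 0 < p -> pnorm p (fun _ : 'I_n => n%:R `^ (- p^-1)) = 1.
Proof.
move=> n0 p0; have N0 : 0 < (n%:R : R) by rewrite ltr0n.
have entry : `|n%:R `^ (- p^-1)| `^ p = (n%:R : R)^-1.
  by rewrite ger0_norm ?powR_ge0 // -powRrM mulNr mulVf ?gt_eqF // powR_inv1 ?ltW.
rewrite /pnorm (eq_bigr _ (fun j _ => entry)) sumr_const card_ord.
by rewrite -[_ *+ n]mulr_natr mulVf ?gt_eqF // powR1.
Qed.

Section CubicalMatrix.
Variables (R : realType) (r n : nat) (A : cmatrix R r n).

Lemma sum_mul_slice (k : 'I_r) (g : 'I_n -> R) :
  \sum_i A i * g (i k) = \sum_s g s * slice_sum A k s.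
Proof.
rewrite (partition_big (fun i : {ffun 'I_r -> 'I_n} => i k) predT) //=.
apply: eq_bigr => s _; rewrite /slice_sum mulr_sumr.
by apply: eq_bigr => i /eqP ->; rewrite mulrC.
Qed.

Lemma entry_sum_slices (k : 'I_r) : entry_sum A = \sum_s slice_sum A k s.
Proof.
have := sum_mul_slice k (fun=> 1).
by under eq_bigr do rewrite mulr1; under [in RHS]eq_bigr do rewrite mul1r.
Qed.

Lemma mform_const (a : R) : mform A (fun=> a) = a ^+ r * entry_sum A.
Proof.
rewrite /mform /entry_sum mulr_sumr; apply: eq_bigr => i _.
by rewrite prodr_const card_ord mulrC.
Qed.

Hypothesis A_nonneg : mnonneg A.

Lemma norm_mform_le (x : 'I_n -> R) : `|mform A x| <= mform A (fun j => `|x j|).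
Proof.
apply: le_trans (ler_norm_sum _ _ _) _; apply: ler_sum => i _.
by rewrite normrM normr_prod ger0_norm.
Qed.

Hypotheses (n_gt0 : (0 < n)%N) (A_regular : mregular A).

Lemma mregular_slice_sum (k : 'I_r) (s : 'I_n) : slice_sum A k s = entry_sum A / n%:R.
Proof.
have -> : entry_sum A = slice_sum A k s *+ n.
  rewrite (entry_sum_slices k) (eq_bigr (fun _ => slice_sum A k s)) => [|t _].
    by rewrite sumr_const card_ord.
  exact: A_regular.
by rewrite -[_ *+ n]mulr_natr mulfK // pnatr_eq0 -lt0n.
Qed.

Lemma mregular_sum_mul (k : 'I_r) (g : 'I_n -> R) :
  \sum_i A i * g (i k) = entry_sum A / n%:R * \sum_s g s.
Proof.
rewrite sum_mul_slice mulr_sumr; apply: eq_bigr => s _.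
by rewrite mregular_slice_sum mulrC.
Qed.

Lemma mform_le_regular (p : R) (x : 'I_n -> R) :
  0 < p -> r%:R <= p -> (forall j, 0 <= x j) -> \sum_j x j `^ p = 1 ->
  mform A x <= n%:R `^ (- (r%:R / p)) * entry_sum A.
Proof.
move=> p0 rp x0 x_unit; set c := n%:R `^ _.
have N0 : 0 < (n%:R : R) by rewrite ltr0n.
apply: (le_trans (y := \sum_i A i *
    (c * (1 - r%:R / p + n%:R / p * \sum_k x (i k) `^ p)))).
  apply: ler_sum => i _; apply: ler_wpM2l => //.
  by have := prod_le_powR_sum (y := fun k => x (i k)) N0 p0; rewrite card_ord; apply.
have expand i : A i * (c * (1 - r%:R / p + n%:R / p * \sum_k x (i k) `^ p)) =
    c * (1 - r%:R / p) * A i + c * (n%:R / p) * \sum_k A i * x (i k) `^ p.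
  by rewrite -mulr_sumr; ring.
rewrite (eq_bigr _ (fun i _ => expand i)) big_split -!mulr_sumr /= exchange_big /=.
rewrite -/(entry_sum A) (eq_bigr (fun=> entry_sum A / n%:R)) => [|k _]; last first.
  by have := mregular_sum_mul k (fun s => x s `^ p); rewrite x_unit mulr1.
rewrite sumr_const card_ord le_eqVlt; apply/orP; left; apply/eqP.
by field; rewrite !gt_eqF.
Qed.

End CubicalMatrix.

Theorem theorem19 (R : realType) (r n : nat) (p : R) (A : cmatrix R r n) :
  (0 < r)%N -> (0 < n)%N -> r%:R <= p ->
  mnonneg A -> msymmetric A -> mregular A ->
  eta_norm p A = (n%:R : R) `^ (- (r%:R / p)) * entry_sum A.
Proof.
move=> r_gt0 n_gt0 rp A_nonneg _ A_regular.
have p0 : 0 < p by apply: lt_le_trans rp; rewrite ltr0n.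
have S0 : 0 <= entry_sum A by apply: sumr_ge0 => i _.
apply: sup_eq_max.
- exists (fun=> n%:R `^ (- p^-1)); first exact: pnorm_const.
  rewrite mform_const -powR_mulrn ?powR_ge0 // -powRrM mulNr [p^-1 * _]mulrC.
  by rewrite ger0_norm // mulr_ge0 ?powR_ge0.
- move=> _ [x /(pnorm_eq1 p0) x_unit <-].
  apply: le_trans (norm_mform_le A_nonneg x) _.
  by apply: mform_le_regular => // j; apply: normr_ge0.
Qed.
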